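(* Let $n\ge2$, $m\ge2$ be integers, let $\mathcal{V}=\mathcal{V}_1\otimes\dots\otimes\mathcal{V}_m$ be a tensor product of vector spaces over a field $\mathbb{F}$, and let $\{x_a : a\in[n]\}$ be a multiset of product tensors with $x_a=x_{a,1}\otimes\dots\otimes x_{a,m}$. For $S\subseteq[n]$ and $j\in[m]$ let $d_j^S=\dim\operatorname{span}\{x_{a,j}:a\in S\}$. Let $r\in \{0,1,\dots,n\}$ be an integer. Suppose that for every subset $S \subseteq [n]$ with $2\leq |S| \leq n$ it holds that $|S|+\min\{|S|,r\} \leq\sum_{j=1}^m (d_j^S-1)+1$. Then any non-zero linear combination of more than $r$ elements of $\{x_a : a \in [n]\}$ has tensor rank greater than $r$, and every tensor $v \in \operatorname{span}\{x_a : a \in [n]\}$ of tensor rank at most $r$ has a unique tensor rank decomposition into a linear combination of elements of $\{x_a : a \in [n]\}$.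
   Context: $[n]=\{1,\dots,n\}$. A product tensor is a non-zero tensor $z_1\otimes\dots\otimes z_m$, $z_j\in\mathcal{V}_j$. The tensor rank of $v$ is the minimum number of product tensors summing to $v$; a tensor rank decomposition is such a minimal sum. A decomposition $v=\sum_{a\in[n]}z_a$ into product tensors constitutes a unique tensor rank decomposition if for every $r'\le n$ and every multiset of product tensors $\{y_a:a\in[r']\}$ with $v=\sum_{a\in[r']}y_a$, it holds that $r'=n$ and $\{z_a\}=\{y_a\}$ as multisets. A ''linear combination of $k$ elements'' means a combination of $k$ of the $x_a$ with non-zero coefficients. *)

(* Finite-dimensional model: V_j = F^(dims j) (row vectors),
   V_1 (x) ... (x) V_m = functions on multi-indices (i_1,...,i_m). *)
From HB Require Import structures.
From mathcomp Require Import all_boot all_order all_algebra.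
Set Implicit Arguments. Unset Strict Implicit. Unset Printing Implicit Defensive.
Import Order.TTheory GRing.Theory Num.Theory.
Local Open Scope ring_scope.

Definition mindex (m : nat) (dims : 'I_m -> nat) :=
  {dffun forall j : 'I_m, 'I_(dims j)}.

Notation tensor F dims := {ffun mindex dims -> F^o}.

Definition tprod (F : fieldType) (m : nat) (dims : 'I_m -> nat)
  (z : forall j : 'I_m, 'rV[F]_(dims j)) : tensor F dims :=
  [ffun i : mindex dims => \prod_(j < m) z j 0 (i j)].

Definition is_product_tensor (F : fieldType) (m : nat) (dims : 'I_m -> nat)
  (t : tensor F dims) : Prop :=
  t != 0 /\ exists z : forall j : 'I_m, 'rV[F]_(dims j), t = tprod z.

Definition is_decomp (F : fieldType) (m : nat) (dims : 'I_m -> nat)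
  (v : tensor F dims) (s : seq (tensor F dims)) : Prop :=
  (forall t, t \in s -> is_product_tensor t) /\ v = \sum_(t <- s) t.

Definition trank_le (F : fieldType) (m : nat) (dims : 'I_m -> nat)
  (v : tensor F dims) (r : nat) : Prop :=
  exists s, (size s <= r)%N /\ is_decomp v s.

Definition unique_trd (F : fieldType) (m : nat) (dims : 'I_m -> nat)
  (v : tensor F dims) (s : seq (tensor F dims)) : Prop :=
  is_decomp v s /\
  forall s', (size s' <= size s)%N -> is_decomp v s' -> perm_eq s s'.

Definition dspan (F : fieldType) (m n : nat) (dims : 'I_m -> nat)
  (x : 'I_n -> forall j : 'I_m, 'rV[F]_(dims j)) (S : {set 'I_n}) (j : 'I_m)
  : nat := \rank (\sum_(a in S) <<x a j>>)%MS.

From HB Require Import structures.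
From mathcomp Require Import all_boot all_order all_algebra.
From mathcomp Require Import zify.
Set Implicit Arguments. Unset Strict Implicit. Unset Printing Implicit Defensive.
Import Order.TTheory GRing.Theory Num.Theory.
Local Open Scope ring_scope.

(* Call a set S of indices connected (for a family of vectors) when its span is not
   the direct sum of the spans of two complementary nonempty parts.  The key
   inequality [dsum_connected] says that for a connected family of product tensors
     sum_j (d_j^S - 1) + 1 <= dim span {x_a : a in S}.
   For rank-one matrices u_a^T w_a (m = 2) this is proved by induction on S: a
   connected S loses one element, and a disconnected S splits into two direct
   summands whose losses are controlled by
     rank A + rank B <= rank (A + B) + dim (row A :&: row B) + dim (col A :&: col B).
   For general m, flattening along a factor j0 with d_j0 > 1 and replacing that
   factor by a constant vector reduces to the bipartite case and lowers the sum.
   A minimal vanishing combination of X product tensors is connected and has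
   rank at most |X| - 1, so |X| >= sum_j (d_j - 1) + 2.  Given sum_(a in S) c_a x_a =
   sum_(b < k) y_b, split the vanishing combination of all x's and y's into
   minimal ones: by hypothesis a block with at least two x's contains more than
   min(#x's, r) y's, and a block with one x and one y identifies them.  Summing
   over the blocks gives k >= min(|S|, r + 1), with k = |S| <= r only when the two
   decompositions agree as multisets. *)

Lemma setDUK (T : finType) (A B : {set T}) : A \subset B -> A :|: B :\: A = B.
Proof. by move=> AB; rewrite -{1}(setIidPr AB) setID. Qed.

Lemma card_set_predD (T : finType) (A B : {set T}) (P : pred T) : B \subset A ->
  #|[set a in A | P a]| = (#|[set a in B | P a]| + #|[set a in A :\: B | P a]|)%N.
Proof.
move=> /subsetP BA; rewrite -(cardsID B [set a in A | P a]); congr (_ + _)%N.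
  by apply: eq_card => a; rewrite !inE andbC; case: (boolP (a \in B)) => // /BA ->.
by apply: eq_card => a; rewrite !inE andbA.
Qed.

Lemma card_set1_pred (T : finType) (a0 : T) (P : pred T) : #|[set a in [set a0] | P a]| = P a0.
Proof.
have [Pa0|nPa0] := boolP (P a0).
  rewrite (_ : [set a in [set a0] | P a] = [set a0]) ?cards1 ?Pa0 //.
  by apply/setP => a; rewrite !inE; case: eqP => // ->.
rewrite (_ : [set a in [set a0] | P a] = set0) ?cards0 ?(negPf nPa0) //.
by apply/setP => a; rewrite !inE; case: eqP => // ->; rewrite (negPf nPa0).
Qed.

Lemma count_map_enum (T : finType) (U : eqType) (A : {set T}) (f : T -> U) u :
  count_mem u [seq f a | a <- enum A] = #|[set a in A | f a == u]|.
Proof.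
rewrite count_map -sum1_count big_enum_cond -sum1_card.
by apply: eq_bigl => a; rewrite !inE.
Qed.

Lemma count_mem_nth (T : eqType) (x0 : T) (s : seq T) u :
  count_mem u s = #|[set i : 'I_(size s) | nth x0 s i == u]|.
Proof.
rewrite -{1}(mkseq_nth x0 s) /mkseq -val_enum_ord -map_comp enumT -enum_setT.
by rewrite count_map_enum; apply: eq_card => i; rewrite !inE.
Qed.

Lemma sum_support (F : fieldType) (I : finType) (V : lmodType F) (c : I -> F) (f : I -> V) :
  \sum_(a : I) c a *: f a = \sum_(a in [set a | c a != 0]) c a *: f a.
Proof.
rewrite (bigID (mem [set a | c a != 0])) /= [X in _ + X]big1 ?addr0 // => a.
by rewrite inE negbK => /eqP ->; rewrite scale0r.
Qed.

Lemma capmx_rowV0 (F : fieldType) m n (r : 'rV[F]_n) (M : 'M_(m, n)) :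
  ~~ (r <= M)%MS -> (r :&: M <= (0 : 'M_n))%MS.
Proof.
move=> rM; rewrite submx0 -mxrank_eq0; apply: contraNT rM; rewrite -lt0n => cap_gt0.
apply: submx_trans (capmxSr r M); have [_ <-] := mxrank_leqif_sup (capmxSl r M).
by rewrite eqn_leq mxrankS ?capmxSl // (leq_trans (rank_leq_row r)).
Qed.

Lemma mxrank_row_mx (F : fieldType) p q1 q2 (A : 'M[F]_(p, q1)) (B : 'M[F]_(p, q2)) :
  (\rank (row_mx A B) + \rank (A^T :&: B^T)%MS = \rank A + \rank B)%N.
Proof. by rewrite -mxrank_tr tr_row_mx -addsmxE mxrank_sum_cap !mxrank_tr. Qed.

Lemma mxrank_addmx_ge (F : fieldType) p q (A B : 'M[F]_(p, q)) :
  (\rank A + \rank B <= \rank (A + B)%R + \rank (A :&: B)%MS + \rank (A^T :&: B^T)%MS)%N.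
Proof.
(* With K the left kernel of A + B, rank K splits as rank (K A) + rank (K :&: ker A),
   where K A lies in both row spaces and K :&: ker A in the left kernel of [A B]. *)
set K := kermx (A + B)%R.
have KA_cap : (K *m A <= A :&: B)%MS.
  have KA_KB : K *m A = - (K *m B).
    by apply/eqP; rewrite -subr_eq0 opprK -mulmxDr mulmx_ker.
  by rewrite sub_capmx submxMl KA_KB -mulNmx submxMl.
have KkerA_ker : (K :&: kermx A <= kermx (row_mx A B))%MS.
  apply/sub_kermxP; rewrite mul_mx_row.
  have KA0 : (K :&: kermx A)%MS *m A = 0 by apply/sub_kermxP/capmxSr.
  have : (K :&: kermx A)%MS *m (A + B)%R = 0 by apply/sub_kermxP/capmxSl.
  by rewrite mulmxDr KA0 add0r => ->; rewrite row_mx0.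
have := mxrank_mul_ker K A; rewrite mxrank_ker.
have := mxrankS KA_cap; have := mxrankS KkerA_ker; rewrite mxrank_ker.
have := mxrank_row_mx A B; have := rank_leq_row (row_mx A B).
have := rank_leq_row (A + B)%R; have := mxrankS (capmxSl A^T B^T); rewrite mxrank_tr.
lia.
Qed.

(** * Spans of families of row vectors *)

Section FamilySpan.
Variables (F : fieldType) (I : finType) (N : nat).
Implicit Types (v : I -> 'rV[F]_N) (S A B C R X Y : {set I}).

Definition vspan v S := (\sum_(a in S) <<v a>>)%MS.
Definition vrank v S := \rank (vspan v S).

Lemma vspan0 v : vspan v set0 = 0.
Proof. by rewrite /vspan big_set0. Qed.

Lemma vrank0 v : vrank v set0 = 0%N.
Proof. by rewrite /vrank vspan0 mxrank0. Qed.

Lemma vspan1 v a : (vspan v [set a] :=: v a)%MS.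
Proof. by rewrite /vspan big_set1; apply: genmxE. Qed.

Lemma vspan_sup v S a : a \in S -> (v a <= vspan v S)%MS.
Proof. by move=> aS; apply: (sumsmx_sup a) => //; rewrite genmxE. Qed.

Lemma vspan_subP v S k (M : 'M_(k, N)) :
  (forall a, a \in S -> (v a <= M)%MS) -> (vspan v S <= M)%MS.
Proof. by move=> vM; apply/sumsmx_subP => a aS; rewrite genmxE vM. Qed.

Lemma vspanS v A B : A \subset B -> (vspan v A <= vspan v B)%MS.
Proof. by move=> /subsetP AB; apply: vspan_subP => a /AB; apply: vspan_sup. Qed.

Lemma vrankS v A B : A \subset B -> (vrank v A <= vrank v B)%N.
Proof. by move=> AB; apply/mxrankS/vspanS. Qed.

Lemma vspanU v A B : (vspan v (A :|: B) :=: vspan v A + vspan v B)%MS.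
Proof.
apply/eqmxP/andP; split; last by rewrite addsmx_sub !vspanS ?subsetUl ?subsetUr.
apply: vspan_subP => a /setUP[aA|aB].
  by rewrite (submx_trans _ (addsmxSl _ _)) ?vspan_sup.
by rewrite (submx_trans _ (addsmxSr _ _)) ?vspan_sup.
Qed.

Lemma vrankU v A B : (vrank v (A :|: B) <= vrank v A + vrank v B)%N.
Proof. by rewrite /vrank vspanU mxrank_adds_leqif. Qed.

Lemma vrank_card v S : (vrank v S <= #|S|)%N.
Proof.
rewrite /vrank /vspan -sum1_card.
elim/big_ind2: _ => [|M1 k1 M2 k2 le1 le2|a _]; first by rewrite mxrank0.
  by rewrite (leq_trans (mxrank_adds_leqif _ _)) ?leq_add.
by rewrite genmxE rank_leq_row.
Qed.

Lemma vspanP v S (t : 'rV_N) :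
  reflect (exists c : I -> F, t = \sum_(a in S) c a *: v a) (t <= vspan v S)%MS.
Proof.
apply: (iffP idP) => [/sub_sums_genmxP[u ->]|[c ->]].
  exists (fun a => u a 0 0); apply: eq_bigr => a _.
  by rewrite {1}[u a]mx11_scalar mul_scalar_mx.
by apply: summx_sub => a aS; apply/scalemx_sub/vspan_sup.
Qed.

Lemma vrank_setD1 v S e : e \in S -> (v e <= vspan v (S :\ e))%MS ->
  vrank v S = vrank v (S :\ e).
Proof.
move=> eS ve; apply/esym/eqmx_rank/andP; split.
  by rewrite vspanS ?subD1set.
apply: vspan_subP => a aS.
have [-> //|nae] := eqVneq a e.
by rewrite vspan_sup // !inE nae.
Qed.

Lemma eq_vrank v v' S : {in S, v =1 v'} -> vrank v S = vrank v' S.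
Proof.
by move=> eq_v; rewrite /vrank /vspan (eq_bigr _ (fun a aS => congr1 _ (eq_v a aS))).
Qed.

Lemma vrank_const (t : 'rV_N) S : S != set0 -> vrank (fun=> t) S = (t != 0).
Proof.
case/set0Pn => e eS; rewrite -rank_rV /vrank; apply/eqmx_rank/andP; split.
  by apply: vspan_subP.
exact: (vspan_sup (fun=> t) eS).
Qed.

Lemma vrankU_cap v A B :
  (vrank v (A :|: B) + \rank (vspan v A :&: vspan v B) = vrank v A + vrank v B)%N.
Proof. by rewrite /vrank vspanU mxrank_sum_cap. Qed.

Lemma vrank_disjointP v A B :
  reflect (vspan v A :&: vspan v B <= (0 : 'M_N))%MS
          (vrank v A + vrank v B <= vrank v (A :|: B))%N.
Proof.
rewrite /vrank vspanU; have [le_sum <-] := mxrank_adds_leqif (vspan v A) (vspan v B).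
by rewrite eqn_leq le_sum; apply: idP.
Qed.

(* Connectivity of S in the linear matroid of v. *)
Definition vconnected v S := (S != set0) &&
  [forall A : {set I}, [&& A \subset S, A != set0 & A != S] ==>
     (vrank v S < vrank v A + vrank v (S :\: A))%N].

Lemma vconnected_neq0 v S : vconnected v S -> S != set0.
Proof. by case/andP. Qed.

Lemma vconnectedPn v S : S != set0 -> ~~ vconnected v S ->
  exists2 A : {set I}, [&& A \subset S, A != set0 & A != S] &
    (vrank v A + vrank v (S :\: A) <= vrank v S)%N.
Proof.
move=> S0; rewrite /vconnected S0 => /forallPn[A].
by rewrite negb_imply -leqNgt => /andP[]; exists A.
Qed.

Lemma vconnected_setD1 v S e : vconnected v S -> e \in S -> S :\ e != set0 ->
  (v e <= vspan v (S :\ e))%MS.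
Proof.
move=> /andP[_ /forallP/(_ [set e])]; rewrite sub1set => + eS nS.
have e0 : [set e] != set0 by apply/set0Pn; exists e; rewrite inE.
have eS' : [set e] != S by apply: contra_neq nS => <-; rewrite setDv.
rewrite eS e0 eS' /= ltnNge -[in X in (_ <= X)%N](setD1K eS).
apply: contraNT => /capmx_rowV0 cap0; apply/vrank_disjointP.
by apply: submx_trans cap0; rewrite capmxS // vspan1.
Qed.

Definition essential v R (t : 'rV_N) := forall C, C \subset R -> C != set0 ->
  (vrank v C + vrank v (R :\: C) <= vrank v R)%N -> ~~ (t <= vspan v (R :\: C))%MS.

Lemma essential_neq0 v R t : R != set0 -> essential v R t -> t != 0.
Proof.
move=> R0 /(_ R (subxx R) R0); rewrite setDv vrank0 addn0 vspan0 => /(_ (leqnn _)).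
by apply: contraNneq => ->; rewrite sub0mx.
Qed.

Lemma essential_split v R A (t1 t2 : 'rV_N) :
  A \subset R -> (vrank v A + vrank v (R :\: A) <= vrank v R)%N ->
  (t2 <= vspan v (R :\: A))%MS -> essential v R (t1 + t2) -> essential v A t1.
Proof.
move=> AR splitA t2R ess C CA C0 splitC.
have RC : R :\: C = (A :\: C) :|: (R :\: A).
  apply/setP => i; rewrite !inE.
  move/implyP: (subsetP CA i); move/implyP: (subsetP AR i).
  by case: (i \in C) (i \in A) (i \in R) => [] [] [].
have CR : C \subset R := subset_trans CA AR.
apply: contra (ess C CR C0 _) => [t1A|]; first by rewrite RC vspanU addmx_sub_adds.
rewrite RC (leq_trans (leq_add (leqnn _) (vrankU _ _ _))) // addnA.
by rewrite (leq_trans _ splitA) ?leq_add2r.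
Qed.

Lemma vconnected_essential v S e : vconnected v S -> e \in S -> essential v (S :\ e) (v e).
Proof.
move=> /andP[_ /forallP conn] eS C CSe C0 splitC; apply/negP => veC.
have CS : C \subset S := subset_trans CSe (subsetDl S _).
have eC : e \notin C by apply/negP => /(subsetP CSe); rewrite !inE eqxx.
have /implyP := conn C; rewrite CS C0 /=.
have -> : C != S by apply: contraNneq eC => ->.
have SCe : S :\: C :\ e = S :\ e :\: C by rewrite !setDDl setUC.
have -> : vrank v (S :\: C) = vrank v (S :\ e :\: C).
  by rewrite (@vrank_setD1 _ _ e) ?SCe // !inE eC.
by move/(_ isT)/leq_trans/(_ splitC); rewrite ltnNge vrankS ?subsetDl.
Qed.

Lemma vrank_relation v X (c : I -> F) e : e \in X -> c e != 0 ->
  \sum_(a in X) c a *: v a = 0 -> (vrank v X < #|X|)%N.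
Proof.
move=> eX ce0 rel; have ve : (v e <= vspan v (X :\ e))%MS.
  have -> : v e = - (c e)^-1 *: \sum_(a in X :\ e) c a *: v a.
    apply: (scalerI ce0); rewrite scalerA mulrN mulfV // scaleN1r.
    by apply/eqP; rewrite -addr_eq0 -big_setD1 // rel.
  by apply/scalemx_sub/vspanP; exists c.
by rewrite (cardsD1 e X) eX add1n (vrank_setD1 eX ve) ltnS vrank_card.
Qed.

Lemma vconnected_minimal_relation v X (c : I -> F) : X != set0 ->
  \sum_(a in X) c a *: v a = 0 ->
  (forall Y, Y \subset X -> Y != set0 -> Y != X -> \sum_(a in Y) c a *: v a != 0) ->
  vconnected v X.
Proof.
move=> X0 rel minimal; rewrite /vconnected X0; apply/forallP => A.
apply/implyP => /and3P[AX A0 AX']; rewrite ltnNge; apply/negP.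
rewrite -{2}(setDUK AX) => /vrank_disjointP cap0.
have sumA : \sum_(a in A) c a *: v a = - \sum_(a in X :\: A) c a *: v a.
  by apply/eqP; move/eqP: rel; rewrite (big_setID A) (setIidPr AX) addr_eq0.
have : ((\sum_(a in A) c a *: v a)%R <= vspan v A :&: vspan v (X :\: A))%MS.
  rewrite sub_capmx {2}sumA eqmx_opp; apply/andP; split; apply/vspanP; exists c => //.
by move/submx_trans/(_ cap0); rewrite submx0; apply/negP; apply: minimal.
Qed.

End FamilySpan.

Lemma eq_vconnected (F : fieldType) (I : finType) N M
  (v : I -> 'rV[F]_N) (v' : I -> 'rV[F]_M) (S : {set I}) :
  (forall A, vrank v A = vrank v' A) -> vconnected v S = vconnected v' S.
Proof. by move=> eq_rk; congr andb; apply: eq_forallb => A; rewrite !eq_rk. Qed.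

Lemma vconnected_transfer (F : fieldType) (I : finType) N M
  (v : I -> 'rV[F]_N) (v' : I -> 'rV[F]_M) (S : {set I}) :
  (forall A B : {set I}, (vrank v A + vrank v B <= vrank v (A :|: B))%N ->
                         (vrank v' A + vrank v' B <= vrank v' (A :|: B))%N) ->
  vconnected v' S -> vconnected v S.
Proof.
move=> transfer /andP[S0 /forallP conn']; rewrite /vconnected S0; apply/forallP => A.
apply/implyP => /[dup] /andP[AS _] /(implyP (conn' A)); apply: contraTT.
by have := transfer A (S :\: A); rewrite setDUK // -!leqNgt.
Qed.

Lemma vrank_linear_inj (F : fieldType) (I : finType) N M
    (f : {linear 'rV[F]_N -> 'rV[F]_M}) (v : I -> 'rV[F]_N) (S : {set I}) :
  injective f -> vrank (f \o v) S = vrank v S.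
Proof.
move=> f_inj; set L := lin1_mx f; have fL x : f x = x *m L by rewrite mul_rV_lin1.
have kerL : kermx L = 0.
  apply/row_matrixP => i; rewrite row0; apply: f_inj.
  by rewrite linear0 fL -row_mul mulmx_ker row0.
have freeL : row_free L by rewrite -kermx_eq0 kerL.
rewrite /vrank -(mxrankMfree (vspan v S) freeL); apply/eqmx_rank/eqmxP.
apply/eqmx_sym/(eqmx_trans (sumsmxMr_gen _ _ _))/eqmx_sums => a _ /=.
by rewrite fL (eq_genmx (eqmxMr L (genmxE (v a)))).
Qed.

(** * Families of rank-one matrices *)

Section OuterProduct.
Variables (F : fieldType) (p q : nat).
Implicit Types (a : 'rV[F]_p) (b : 'rV[F]_q).

Lemma rowV_neq0_entry k (a : 'rV[F]_k) : a != 0 -> exists i, a 0 i != 0.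
Proof. by case/matrix0Pn => i [j aij]; exists j; rewrite -(ord1 i). Qed.

Lemma row_outer a b i : row i (a^T *m b) = a 0 i *: b.
Proof. by apply/rowP => j; rewrite !mxE big_ord1 !mxE. Qed.

Lemma outer_submx a b k (C : 'M[F]_(k, q)) : a != 0 -> (a^T *m b <= C)%MS -> (b <= C)%MS.
Proof.
move=> /rowV_neq0_entry[i ai] /(submx_trans (row_sub i _)).
by rewrite row_outer => /(scalemx_sub (a 0 i)^-1); rewrite scalerA mulVf ?scale1r.
Qed.

Lemma outer_neq0 a b : a != 0 -> b != 0 -> a^T *m b != 0.
Proof.
move=> /rowV_neq0_entry[i ai] b0; apply: contraNneq b0 => /(congr1 (row i)).
by rewrite row_outer row0 => /eqP; rewrite scaler_eq0 (negPf ai).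
Qed.

Lemma mxrank_outer a b : a != 0 -> b != 0 -> \rank (a^T *m b) = 1%N.
Proof.
move=> a0 b0; apply/eqP; rewrite eqn_leq lt0n mxrank_eq0 outer_neq0 // andbT.
exact: leq_trans (mxrankM_maxr _ _) (rank_leq_row b).
Qed.

End OuterProduct.

Section Bipartite.
Variables (F : fieldType) (I : finType) (p q : nat).
Variables (u : I -> 'rV[F]_p) (w : I -> 'rV[F]_q).
Hypotheses (u_neq0 : forall a, u a != 0) (w_neq0 : forall a, w a != 0).
Implicit Types (S A B R : {set I}) (M : 'M[F]_(p, q)).

Definition uw a := mxvec ((u a)^T *m w a).

Lemma uw_neq0 a : uw a != 0.
Proof. by rewrite mxvec_eq0 outer_neq0. Qed.

Lemma uw_span_coef R M : (mxvec M <= vspan uw R)%MS ->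
  exists c : I -> F, M = \sum_(a in R) c a *: ((u a)^T *m w a).
Proof.
move=> /vspanP[c Mc]; exists c; rewrite -[M]mxvecK Mc linear_sum.
by apply: eq_bigr => a _; rewrite linearZ /= mxvecK.
Qed.

Lemma uw_span_row R M : (mxvec M <= vspan uw R)%MS -> (M <= vspan w R)%MS.
Proof.
move=> /uw_span_coef[c ->]; apply: summx_sub => a aR.
by apply/scalemx_sub/(submx_trans (submxMl _ _))/vspan_sup.
Qed.

Lemma uw_span_col R M : (mxvec M <= vspan uw R)%MS -> (M^T <= vspan u R)%MS.
Proof.
move=> /uw_span_coef[c ->]; rewrite linear_sum; apply: summx_sub => a aR.
rewrite linearZ /= trmx_mul trmxK.
by apply/scalemx_sub/(submx_trans (submxMl _ _))/vspan_sup.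
Qed.

(* The induction invariant behind [vrank_uw_connected]: M plays the role of the
   element removed from a connected set, and [essential] ensures that it is not
   lost when R splits into direct summands. *)
Definition uw_bound R := forall M, (mxvec M <= vspan uw R)%MS ->
  essential uw R (mxvec M) -> (vrank u R + vrank w R <= vrank uw R + \rank M)%N.

Lemma uw_bound_connected S e : e \in S -> vconnected uw S -> uw_bound (S :\ e) ->
  (vrank u S + vrank w S <= vrank uw S + 1)%N.
Proof.
move=> eS connS bound.
have [Se0|Se_neq0] := eqVneq (S :\ e) set0.
  have -> : S = [set e] by rewrite -(setD1K eS) Se0 setU0.
  by rewrite /vrank !vspan1 !rank_rV u_neq0 w_neq0 uw_neq0.
have uw_e := vconnected_setD1 connS eS Se_neq0.
have := bound _ uw_e (vconnected_essential connS eS); rewrite mxrank_outer //.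
have u_e : (u e <= vspan u (S :\ e))%MS.
  by apply: (outer_submx (w_neq0 e)); have := uw_span_col uw_e; rewrite trmx_mul trmxK.
have w_e : (w e <= vspan w (S :\ e))%MS.
  exact: (outer_submx (u_neq0 e)) (uw_span_row uw_e).
by rewrite (vrank_setD1 eS u_e) (vrank_setD1 eS w_e) (vrank_setD1 eS uw_e).
Qed.

Lemma uw_bound_split R A : A \subset R ->
  (vrank uw A + vrank uw (R :\: A) <= vrank uw R)%N ->
  uw_bound A -> uw_bound (R :\: A) -> uw_bound R.
Proof.
move=> AR splitA boundA boundA' M; set A' := R :\: A in splitA boundA' *.
have R_AA' : R = A :|: A' by rewrite setDUK.
rewrite {1}R_AA' vspanU => /sub_addsmxP[[c1 c2] /= M12] essM.
set t1 := c1 *m _ in M12; set t2 := c2 *m _ in M12.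
have t1A : (t1 <= vspan uw A)%MS by apply: submxMl.
have t2A' : (t2 <= vspan uw A')%MS by apply: submxMl.
have ess1 : essential uw A t1.
  by apply: essential_split AR splitA t2A' _; rewrite -M12.
have ess2 : essential uw A' t2.
  have A'A : R :\: A' = A by rewrite setDDr setDv set0U (setIidPr AR).
  apply: (essential_split (t1 := t2) (subsetDl R A) _ (t2 := t1)).
  - by rewrite A'A addnC.
  - by rewrite A'A.
  - by rewrite addrC -M12.
have := boundA (vec_mx t1); have := boundA' (vec_mx t2); rewrite !vec_mxK.
move=> /(_ t2A' ess2) bound2 /(_ t1A ess1) bound1.
have M_sum : M = vec_mx t1 + vec_mx t2 by rewrite -linearD /= -M12 mxvecK.
have row1 : (vec_mx t1 <= vspan w A)%MS by apply: uw_span_row; rewrite vec_mxK.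
have row2 : (vec_mx t2 <= vspan w A')%MS by apply: uw_span_row; rewrite vec_mxK.
have col1 : ((vec_mx t1)^T <= vspan u A)%MS by apply: uw_span_col; rewrite vec_mxK.
have col2 : ((vec_mx t2)^T <= vspan u A')%MS by apply: uw_span_col; rewrite vec_mxK.
have rank12 : (\rank (vec_mx t1) + \rank (vec_mx t2) <= \rank M +
    \rank (vspan w A :&: vspan w A') + \rank (vspan u A :&: vspan u A'))%N.
  rewrite M_sum (leq_trans (mxrank_addmx_ge _ _)) // -!addnA leq_add2l.
  by rewrite leq_add ?mxrankS ?capmxS.
have := vrankU_cap u A A'; have := vrankU_cap w A A'; rewrite -R_AA'.
lia.
Qed.

Lemma uw_boundP R : uw_bound R.
Proof.
have [k] := ubnP #|R|; elim: k R => // k IH R ltRk.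
have [->|R0] := eqVneq R set0; first by move=> M _ _; rewrite !vrank0.
have [connR|/(vconnectedPn R0)[A /and3P[AR A0 AnR] splitA]] := boolP (vconnected uw R).
  have /set0Pn[e eR] := R0.
  have ltRe : (#|R :\ e| < k)%N by rewrite (cardsD1 e R) eR in ltRk.
  move=> M MR /(essential_neq0 R0); rewrite mxvec_eq0 -mxrank_eq0 -lt0n => M0.
  by rewrite (leq_trans (uw_bound_connected eR connR (IH _ ltRe))) ?leq_add2l.
apply: (uw_bound_split AR splitA); apply: IH; rewrite -ltnS (leq_trans _ ltRk) // ltnS.
  by apply: proper_card; rewrite properEneq AnR.
by rewrite (cardsD R A) (setIidPr AR) ltn_subrL !card_gt0 A0.
Qed.

Lemma vrank_uw_connected S : vconnected uw S ->
  (vrank u S + vrank w S <= vrank uw S + 1)%N.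
Proof.
move=> connS; have /set0Pn[e eS] := vconnected_neq0 connS.
exact: uw_bound_connected eS connS (@uw_boundP (S :\ e)).
Qed.

Lemma vrank_uw_disjoint A B : (vrank w A + vrank w B <= vrank w (A :|: B))%N ->
  (vrank uw A + vrank uw B <= vrank uw (A :|: B))%N.
Proof.
move=> /vrank_disjointP capw0; apply/vrank_disjointP/rV_subP => t.
rewrite sub_capmx -{1 2}(vec_mxK t) => /andP[/uw_span_row tA /uw_span_row tB].
have : (vec_mx t <= (0 : 'M_q))%MS by apply: submx_trans capw0; rewrite sub_capmx tA tB.
by rewrite !submx0 vec_mx_eq0.
Qed.

Lemma vconnected_uw S : vconnected uw S -> vconnected w S.
Proof. exact/vconnected_transfer/vrank_uw_disjoint. Qed.

End Bipartite.

(** * Flattening tensors *)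

Section Flattening.
Variables (F : fieldType) (m : nat) (dims : 'I_m -> nat).
Local Notation NN := #|{: mindex dims}|.
Implicit Types (t : tensor F dims) (z : forall j : 'I_m, 'rV[F]_(dims j)).

Definition tvec t : 'rV[F]_NN := \row_i t (enum_val i).

Lemma tvecE t i : tvec t 0 (enum_rank i) = t i.
Proof. by rewrite mxE enum_rankK. Qed.

Lemma tvec_inj : injective tvec.
Proof. by move=> t t' eq_t; apply/ffunP => i; rewrite -!tvecE eq_t. Qed.

Lemma tvec_is_linear : linear tvec.
Proof. by move=> a t t'; apply/rowP => i; rewrite !mxE !ffunE. Qed.
HB.instance Definition _ :=
  GRing.isLinear.Build F (tensor F dims) 'rV[F]_NN *:%R tvec tvec_is_linear.

Lemma tvec_eq0 t : (tvec t == 0) = (t == 0).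
Proof. by rewrite -(inj_eq tvec_inj) linear0. Qed.

Lemma tprodE z i : tprod z i = \prod_(j < m) z j 0 (i j).
Proof. by rewrite ffunE. Qed.

Lemma tprod_neq0 z : (tprod z != 0) = [forall j, z j != 0].
Proof.
apply/idP/forallP => [tz0 j|z_neq0].
  apply: contraNneq tz0 => zj0; apply/eqP/ffunP => i.
  by rewrite tprodE ffunE (bigD1 j) //= zj0 mxE mul0r.
have /fin_all_exists[i zi] : forall j, exists k, z j 0 k != 0.
  by move=> j; apply: rowV_neq0_entry.
apply/eqP => /ffunP/(_ (finfun i)); rewrite tprodE ffunE => /eqP.
by rewrite prodf_seq_eq0 => /hasP[j _]; rewrite ffunE (negPf (zi j)).
Qed.

Variables (j0 : 'I_m) (k0 : 'I_(dims j0)).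

Definition set_index (i : mindex dims) (k : 'I_(dims j0)) : mindex dims :=
  finfun (dfwith (fun j => i j) k).

Lemma set_index_in i k : set_index i k j0 = k.
Proof. by rewrite ffunE dfwith_in. Qed.

Lemma set_index_out i k j : j0 != j -> set_index i k j = i j.
Proof. by move=> j0j; rewrite ffunE dfwith_out. Qed.

Lemma set_index_id i k k' : set_index (set_index i k) k' = set_index i k'.
Proof.
apply/ffunP => j; have [<-|j0j] := eqVneq j0 j; first by rewrite !set_index_in.
by rewrite !set_index_out.
Qed.

Lemma set_indexK i : set_index i (i j0) = i.
Proof.
apply/ffunP => j; have [<-|j0j] := eqVneq j0 j; first by rewrite set_index_in.
by rewrite set_index_out.
Qed.

(* Entry (k, c) is the coordinate of v at [enum_val c] with its j0-th index set to
   k, kept only when that index was k0: a product tensor becomes the outer product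
   of its j0-th factor with the product tensor whose j0-th factor is 'e_k0. *)
Definition flatten (v : 'rV[F]_NN) : 'rV[F]_(dims j0 * NN) :=
  mxvec (\matrix_(k, c) (v 0 (enum_rank (set_index (enum_val c) k)) *
                         (enum_val c j0 == k0)%:R)).

Lemma flatten_is_linear : linear flatten.
Proof.
move=> a v v'; rewrite /flatten -linearP; congr mxvec; apply/matrixP => k c.
by rewrite !mxE mulrDl mulrA.
Qed.
HB.instance Definition _ :=
  GRing.isLinear.Build F 'rV[F]_NN 'rV[F]_(dims j0 * NN) *:%R flatten flatten_is_linear.

Lemma flatten_inj : injective flatten.
Proof.
move=> v v' eq_v; apply/rowP => c; pose i := enum_val c.
have := congr1 (fun M => vec_mx M (i j0) (enum_rank (set_index i k0))) eq_v.
by rewrite !mxvecK !mxE enum_rankK set_index_in eqxx !mulr1 set_index_id set_indexK enum_valK.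
Qed.

Lemma flatten_tprod z :
  flatten (tvec (tprod z)) = mxvec ((z j0)^T *m tvec (tprod (dfwith z (delta_mx 0 k0)))).
Proof.
congr mxvec; apply/matrixP => k c; rewrite !mxE big_ord1 !mxE enum_rankK !tprodE.
rewrite (bigD1 j0) // [in RHS](bigD1 j0) //= dfwith_in set_index_in !mxE eqxx /=.
rewrite -mulrA [X in _ * X]mulrC; congr (_ * (_ * _)); apply: eq_bigr => j jj0.
by rewrite set_index_out 1?eq_sym // dfwith_out 1?eq_sym.
Qed.

End Flattening.

(** * Connected families of product tensors *)

Section ProductTensorFamily.
Variables (F : fieldType) (m : nat) (dims : 'I_m -> nat) (I : finType).
Implicit Types (z : I -> forall j : 'I_m, 'rV[F]_(dims j)) (S A X Y : {set I}).

Definition ptvec z a := tvec (tprod (z a)).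

Lemma ptvec_neq0 z a : (forall j, z a j != 0) -> ptvec z a != 0.
Proof. by move=> za; rewrite /ptvec tvec_eq0 tprod_neq0; apply/forallP. Qed.

(* [dsum x S] is convertible to the sum of the [dspan x S j - 1] of the statement. *)
Definition dsum z S := (\sum_(j < m) (vrank (z^~ j) S - 1))%N.

Section ReplaceFactor.
Variables (z : I -> forall j : 'I_m, 'rV[F]_(dims j)) (j0 : 'I_m) (k0 : 'I_(dims j0)).
Hypothesis z_neq0 : forall a j, z a j != 0.

Definition zdelta a := dfwith (z a) (delta_mx 0 k0 : 'rV_(dims j0)).

Lemma delta_neq0 : delta_mx 0 k0 != 0 :> 'rV[F]_(dims j0).
Proof. by apply/matrix0Pn; exists 0, k0; rewrite mxE !eqxx oner_eq0. Qed.

Lemma zdelta_neq0 a j : zdelta a j != 0.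
Proof. by rewrite /zdelta; case: dfwithP => [|j' _]; rewrite ?delta_neq0. Qed.

Lemma dsum_zdelta S : S != set0 -> (dsum zdelta S + (vrank (z^~ j0) S - 1) = dsum z S)%N.
Proof.
move=> S0; have d0 : vrank (zdelta^~ j0) S = 1%N.
  rewrite (@eq_vrank _ _ _ _ (fun=> delta_mx 0 k0)) ?vrank_const ?delta_neq0 //.
  by move=> a _; rewrite /zdelta dfwith_in.
rewrite /dsum (bigD1 j0 (P := xpredT)) //= [in RHS](bigD1 j0 (P := xpredT)) //= d0.
rewrite subnn add0n addnC; congr (_ + _)%N; apply: eq_bigr => j jj0; congr (_ - _)%N.
by apply: eq_vrank => a _; rewrite /zdelta dfwith_out 1?eq_sym.
Qed.

Lemma vrank_uw_zdelta A : vrank (uw (z^~ j0) (ptvec zdelta)) A = vrank (ptvec z) A.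
Proof.
rewrite -(vrank_linear_inj _ _ (@flatten_inj F m dims j0 k0)).
by apply: eq_vrank => a _; rewrite /uw /= flatten_tprod.
Qed.

Lemma vconnected_zdelta S : vconnected (ptvec z) S -> vconnected (ptvec zdelta) S.
Proof. by rewrite -(eq_vconnected _ vrank_uw_zdelta); apply: vconnected_uw. Qed.

Lemma vrank_zdelta S : vconnected (ptvec z) S ->
  (vrank (z^~ j0) S + vrank (ptvec zdelta) S <= vrank (ptvec z) S + 1)%N.
Proof.
rewrite -(eq_vconnected _ vrank_uw_zdelta) -vrank_uw_zdelta.
by apply: vrank_uw_connected => // a; apply/ptvec_neq0/zdelta_neq0.
Qed.

End ReplaceFactor.

Theorem dsum_connected z S : (forall a j, z a j != 0) -> vconnected (ptvec z) S ->
  (dsum z S + 1 <= vrank (ptvec z) S)%N.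
Proof.
have [k] := ubnP (dsum z S); elim: k z => // k IH z lt_k z_neq0 connS.
have /set0Pn[e eS] := vconnected_neq0 connS.
have [/existsP[j0 dj0]|/existsPn small] := boolP [exists j, 1 < vrank (z^~ j) S]%N.
  have [k0 _] := rowV_neq0_entry (z_neq0 e j0).
  have dsum_z := dsum_zdelta z k0 (vconnected_neq0 connS).
  have lt_k' : (dsum (zdelta z k0) S < k)%N by lia.
  have := IH _ lt_k' (zdelta_neq0 k0 z_neq0) (vconnected_zdelta k0 connS).
  have := vrank_zdelta k0 z_neq0 connS.
  lia.
have -> : dsum z S = 0%N by apply: big1 => j _; apply/eqP; rewrite subn_eq0 leqNgt small.
rewrite (leq_trans _ (vrankS _ (_ : [set e] \subset S))) ?sub1set //.
by rewrite /vrank vspan1 rank_rV ptvec_neq0.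
Qed.

Lemma tvec_sumZ z (c : I -> F) X :
  tvec (\sum_(a in X) c a *: tprod (z a)) = \sum_(a in X) c a *: ptvec z a.
Proof. by rewrite linear_sum; apply: eq_bigr => a _; rewrite linearZ. Qed.

Lemma dsum_minimal_relation z (c : I -> F) X :
  (forall a j, z a j != 0) -> (forall a, a \in X -> c a != 0) -> X != set0 ->
  \sum_(a in X) c a *: tprod (z a) = 0 ->
  (forall Y, Y \subset X -> Y != set0 -> Y != X -> \sum_(a in Y) c a *: tprod (z a) != 0) ->
  (dsum z X + 2 <= #|X|)%N.
Proof.
move=> z_neq0 c_neq0 X0 rel minimal.
have relv : \sum_(a in X) c a *: ptvec z a = 0 by rewrite -tvec_sumZ rel linear0.
have connX : vconnected (ptvec z) X.
  apply: vconnected_minimal_relation X0 relv _ => Y YX Y0 YX'.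
  by rewrite -tvec_sumZ tvec_eq0 minimal.
have /set0Pn[e eX] := X0.
have := vrank_relation eX (c_neq0 e eX) relv; have := dsum_connected z_neq0 connX.
lia.
Qed.

End ProductTensorFamily.

(** * Comparing two decompositions *)

Section Exchange.
Variables (F : fieldType) (n m : nat) (dims : 'I_m -> nat).
Variables (x : 'I_n -> forall j : 'I_m, 'rV[F]_(dims j)) (r : nat).
Hypothesis x_neq0 : forall a, tprod (x a) != 0.
Hypothesis x_dsum : forall S : {set 'I_n}, (2 <= #|S|)%N ->
  (#|S| + minn #|S| r <= dsum x S + 1)%N.
Variables (k : nat) (y : 'I_k -> forall j : 'I_m, 'rV[F]_(dims j)).
Variables (c : 'I_n -> F) (S : {set 'I_n}).
Hypothesis y_neq0 : forall b, tprod (y b) != 0.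
Hypothesis c_neq0 : forall a, a \in S -> c a != 0.

Local Notation II := ('I_n + 'I_k)%type.
Implicit Types X Y Z : {set II}.

(* The relation sum_(a in S) c a *: x a = sum_b y b, as a vanishing combination of
   the family xy indexed by the disjoint union of 'I_n and 'I_k. *)
Definition xy (i : II) := match i with inl a => x a | inr b => y b end.
Definition coef (i : II) := match i with inl a => c a | inr _ => -1 end.
Definition supp : {set II} := [set i | match i with inl a => a \in S | inr _ => true end].
Definition lpart X : {set 'I_n} := [set a | inl a \in X].
Definition rpart X : {set 'I_k} := [set b | inr b \in X].
Definition xysum X := \sum_(i in X) coef i *: tprod (xy i).

Definition lmult X t := #|[set a in lpart X | c a *: tprod (x a) == t]|.
Definition rmult X t := #|[set b in rpart X | tprod (y b) == t]|.

Definition dominated X := (minn #|lpart X| r.+1 <= #|rpart X|)%N /\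
  ((#|lpart X| <= r)%N -> #|rpart X| = #|lpart X| -> lmult X =1 rmult X).

Lemma xy_neq0 i j : xy i j != 0.
Proof.
by case: i => [a|b] /=; [move: (x_neq0 a) | move: (y_neq0 b)]; rewrite tprod_neq0 => /forallP.
Qed.

Lemma coef_neq0 i : i \in supp -> coef i != 0.
Proof. by case: i => [a|b]; rewrite inE /= ?oppr_eq0 ?oner_eq0 //; apply: c_neq0. Qed.

Lemma card_lpart_rpart X : #|X| = (#|lpart X| + #|rpart X|)%N.
Proof.
rewrite -!sum1_card big_sumType /=.
by congr (_ + _)%N; apply: eq_bigl => i; rewrite inE.
Qed.

Lemma lpartD X Y : lpart (X :\: Y) = lpart X :\: lpart Y.
Proof. by apply/setP => a; rewrite !inE. Qed.

Lemma rpartD X Y : rpart (X :\: Y) = rpart X :\: rpart Y.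
Proof. by apply/setP => a; rewrite !inE. Qed.

Lemma lpartS X Y : Y \subset X -> lpart Y \subset lpart X.
Proof. by move=> /subsetP YX; apply/subsetP => a; rewrite !inE => /YX. Qed.

Lemma rpartS X Y : Y \subset X -> rpart Y \subset rpart X.
Proof. by move=> /subsetP YX; apply/subsetP => a; rewrite !inE => /YX. Qed.

Lemma dominated_setD X Y : Y \subset X ->
  dominated Y -> dominated (X :\: Y) -> dominated X.
Proof.
move=> YX [domY eqY] [domXY eqXY].
have cardl : #|lpart X| = (#|lpart Y| + #|lpart (X :\: Y)|)%N.
  by rewrite lpartD -(cardsID (lpart Y)) (setIidPr (lpartS YX)).
have cardr : #|rpart X| = (#|rpart Y| + #|rpart (X :\: Y)|)%N.
  by rewrite rpartD -(cardsID (rpart Y)) (setIidPr (rpartS YX)).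
split=> [|le_r eq_lr t]; first by rewrite cardl cardr; lia.
have [eqY' eqXY'] : #|rpart Y| = #|lpart Y| /\ #|rpart (X :\: Y)| = #|lpart (X :\: Y)|.
  by move: domY domXY le_r eq_lr; rewrite cardl cardr; lia.
have -> : lmult X t = (lmult Y t + lmult (X :\: Y) t)%N.
  by rewrite /lmult lpartD (card_set_predD _ (lpartS YX)).
have -> : rmult X t = (rmult Y t + rmult (X :\: Y) t)%N.
  by rewrite /rmult rpartD (card_set_predD _ (rpartS YX)).
by rewrite eqY ?eqXY //; move: le_r; rewrite cardl; lia.
Qed.

Lemma mult_pair Y a0 b0 : lpart Y = [set a0] -> rpart Y = [set b0] -> xysum Y = 0 ->
  lmult Y =1 rmult Y.
Proof.
move=> la lb sumY t.
have inl_Y a : (inl a \in Y) = (a == a0) by rewrite -in_set1 -la inE.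
have inr_Y b : (inr b \in Y) = (b == b0) by rewrite -in_set1 -lb inE.
have Y2 : Y = inl a0 |: [set inr b0].
  by apply/setP => -[a|b]; rewrite !inE ?inl_Y ?inr_Y /= ?orbF.
have eq_xy : c a0 *: tprod (x a0) = tprod (y b0).
  by apply/eqP; rewrite -subr_eq0 -scaleN1r -sumY /xysum Y2 big_setU1 ?inE // big_set1.
by rewrite /lmult /rmult la lb !card_set1_pred eq_xy.
Qed.

Lemma dominated_minimal Y : Y \subset supp -> Y != set0 -> xysum Y = 0 ->
  (forall Z, Z \subset Y -> Z != set0 -> Z != Y -> xysum Z != 0) -> dominated Y.
Proof.
move=> Ysupp Y0 sumY minY.
have coefY i : i \in Y -> coef i != 0 by move=> /(subsetP Ysupp); apply: coef_neq0.
have := dsum_minimal_relation xy_neq0 coefY Y0 sumY minY.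
have : (dsum x (lpart Y) <= dsum xy Y)%N.
  apply: leq_sum => j _; rewrite leq_sub2r //; apply/mxrankS/vspan_subP => a.
  by rewrite inE => /(vspan_sup (xy^~ j)).
rewrite card_lpart_rpart; case: (ltnP 1 #|lpart Y|) => [/x_dsum|le1].
  by move=> ? ? ?; split=> [|? ?]; [lia | exfalso; lia].
move=> _ ?; split=> [|_ eq_ba]; first by lia.
have /cards1P[a0 la] : #|lpart Y| == 1%N by apply/eqP; lia.
have /cards1P[b0 lb] : #|rpart Y| == 1%N by apply/eqP; lia.
exact: mult_pair la lb sumY.
Qed.

Lemma dominated0 : dominated set0.
Proof.
have l0 : lpart set0 = set0 by apply/setP => a; rewrite !inE.
have r0 : rpart set0 = set0 by apply/setP => b; rewrite !inE.
split=> [|_ _ t]; first by rewrite l0 r0 cards0.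
by rewrite /lmult /rmult l0 r0 !setIdE !set0I !cards0.
Qed.

Lemma dominated_zero_sum X : X \subset supp -> xysum X = 0 -> dominated X.
Proof.
have [N] := ubnP #|X|; elim: N X => // N IH X ltXN Xsupp sumX.
have [->|X0] := eqVneq X set0; first exact: dominated0.
pose P Y := [&& Y \subset X, Y != set0 & xysum Y == 0].
have PX : P X by rewrite /P subxx X0 sumX eqxx.
case: (arg_minnP (fun Y => #|Y|) PX) => Y /and3P[YX Y0 /eqP sumY] minY.
apply: (dominated_setD YX).
  apply: dominated_minimal (subset_trans YX Xsupp) Y0 sumY _ => Z ZY Z0 ZY'.
  apply/eqP => sumZ; have := minY Z; rewrite /P (subset_trans ZY YX) Z0 sumZ eqxx.
  by move/(_ isT); rewrite leqNgt proper_card // properEneq ZY' ZY.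
have Y_gt0 : (0 < #|Y|)%N by rewrite card_gt0.
apply: IH; first by rewrite cardsD (setIidPr YX); have := subset_leq_card YX; lia.
  exact: subset_trans (subsetDl X Y) Xsupp.
by move: sumX; rewrite /xysum (big_setID Y) (setIidPr YX) /= -/(xysum Y) sumY add0r.
Qed.

Lemma exchange : \sum_(a in S) c a *: tprod (x a) = \sum_(b < k) tprod (y b) ->
  (minn #|S| r.+1 <= k)%N /\ ((#|S| <= r)%N -> k = #|S| -> forall t,
    #|[set a in S | c a *: tprod (x a) == t]| = #|[set b : 'I_k | tprod (y b) == t]|).
Proof.
move=> eq_sum; have lS : lpart supp = S by apply/setP => a; rewrite !inE.
have rS : rpart supp = setT by apply/setP => b; rewrite !inE.
have sum0 : xysum supp = 0.
  rewrite /xysum big_sumType /=.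
  under [X in X + _]eq_bigl => a do rewrite inE.
  under [X in _ + X]eq_bigl => b do rewrite inE.
  by rewrite eq_sum -big_split big1 // => b _ /=; rewrite scaleN1r subrr.
have [dom eq_mult] := dominated_zero_sum (subxx supp) sum0.
move: dom eq_mult; rewrite /lmult /rmult lS rS cardsT card_ord => dom eq_mult.
split=> // le_r eq_k t.
by rewrite eq_mult //; apply: eq_card => b; rewrite !inE.
Qed.

End Exchange.

Section Decompositions.
Variables (F : fieldType) (m : nat) (dims : 'I_m -> nat).
Implicit Types (s : seq (tensor F dims)) (z : forall j : 'I_m, 'rV[F]_(dims j)).

Lemma product_tensor_seq s : (forall t, t \in s -> is_product_tensor t) ->
  exists y : 'I_(size s) -> forall j : 'I_m, 'rV[F]_(dims j),
    forall b, tprod (y b) = nth 0 s b.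
Proof.
move=> s_prod.
suff /fin_all_exists : forall b : 'I_(size s), exists z, tprod z = nth 0 s b by [].
by move=> b; have [_ [z ->]] := s_prod _ (mem_nth 0 (ltn_ord b)); exists z.
Qed.

Lemma scale_tprod z (j0 : 'I_m) (a : F) : a *: tprod z = tprod (dfwith z (a *: z j0)).
Proof.
apply/ffunP => i; rewrite ffunE !tprodE (bigD1 j0) // [in RHS](bigD1 j0) //=.
rewrite dfwith_in mxE -[a *: _]/(a * _) mulrA; congr (_ * _); apply: eq_bigr => j jj0.
by rewrite dfwith_out // eq_sym.
Qed.

End Decompositions.

Section Uniqueness.
Variables (F : fieldType) (n m : nat) (dims : 'I_m -> nat).
Variables (x : 'I_n -> forall j : 'I_m, 'rV[F]_(dims j)) (r : nat).
Hypothesis x_neq0 : forall a, tprod (x a) != 0.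
Hypothesis x_dsum : forall S : {set 'I_n}, (2 <= #|S|)%N ->
  (#|S| + minn #|S| r <= dsum x S + 1)%N.
Variables (S : {set 'I_n}) (c : 'I_n -> F).
Hypothesis c_neq0 : forall a, a \in S -> c a != 0.

Lemma decomposition_count (s : seq (tensor F dims)) :
  (forall t, t \in s -> is_product_tensor t) ->
  \sum_(a in S) c a *: tprod (x a) = \sum_(t <- s) t ->
  (minn #|S| r.+1 <= size s)%N /\
  ((#|S| <= r)%N -> size s = #|S| -> perm_eq [seq c a *: tprod (x a) | a <- enum S] s).
Proof.
move=> s_prod eq_sum; have [y y_s] := product_tensor_seq s_prod.
have y_neq0 b : tprod (y b) != 0 by rewrite y_s; case: (s_prod _ (mem_nth 0 (ltn_ord b))).
have eq_sum_y : \sum_(a in S) c a *: tprod (x a) = \sum_(b < size s) tprod (y b).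
  by rewrite eq_sum (big_nth 0) big_mkord; apply: eq_bigr => b _; rewrite y_s.
have [le_min eq_mult] := exchange x_neq0 x_dsum y_neq0 c_neq0 eq_sum_y.
split=> // le_r eq_size; apply/allP => t _; apply/eqP.
rewrite count_map_enum eq_mult // (count_mem_nth 0).
by apply: eq_card => b; rewrite !inE y_s.
Qed.

Lemma trank_gt : (r < #|S|)%N -> ~ trank_le (\sum_(a in S) c a *: tprod (x a)) r.
Proof.
move=> lt_rS [s [le_sr [s_prod eq_sum]]].
by have [le_min _] := decomposition_count s_prod eq_sum; lia.
Qed.

Lemma unique_trd_sum : (0 < m)%N -> (#|S| <= r)%N ->
  unique_trd (\sum_(a in S) c a *: tprod (x a)) [seq c a *: tprod (x a) | a <- enum S].
Proof.
move=> m_gt0 le_Sr; pose j0 := Ordinal m_gt0.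
split=> [|s le_sS [s_prod eq_sum]].
  split=> [_ /mapP[a aS ->]|]; last by rewrite big_map big_enum.
  split; last by exists (dfwith (x a) (c a *: x a j0)); apply: scale_tprod.
  by rewrite scaler_eq0 negb_or c_neq0 ?x_neq0 // -mem_enum.
have [le_Ss /(_ le_Sr)] := decomposition_count s_prod eq_sum; apply.
apply/eqP; rewrite eqn_leq -{2}(minn_idPl (leqW le_Sr)) le_Ss andbT.
by move: le_sS; rewrite size_map -cardE.
Qed.

End Uniqueness.

Unset Implicit Arguments.
Set Strict Implicit.

Theorem corollary7p3 (F : fieldType) (n m : nat) (dims : 'I_m -> nat)
  (x : 'I_n -> forall j : 'I_m, 'rV[F]_(dims j)) (r : nat) :
  (2 <= n)%N -> (2 <= m)%N -> (r <= n)%N ->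
  (forall a, is_product_tensor (tprod (x a))) ->
  (forall S : {set 'I_n}, (2 <= #|S|)%N ->
     (#|S| + minn #|S| r <= \sum_(j < m) (dspan x S j - 1) + 1)%N) ->
  (forall (S : {set 'I_n}) (c : 'I_n -> F),
     (r < #|S|)%N -> (forall a, a \in S -> c a != 0) ->
     \sum_(a in S) c a *: tprod (x a) != 0 ->
     ~ trank_le (\sum_(a in S) c a *: tprod (x a)) r) /\
  (forall v : tensor F dims,
     (exists c : 'I_n -> F, v = \sum_(a < n) c a *: tprod (x a)) ->
     trank_le v r ->
     exists (S : {set 'I_n}) (c : 'I_n -> F),
       (forall a, a \in S -> c a != 0) /\
       v = \sum_(a in S) c a *: tprod (x a) /\
       unique_trd v [seq c a *: tprod (x a) | a <- enum S]).
Proof.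
move=> _ m_gt1 _ x_prod x_dsum.
have x_neq0 a : tprod (x a) != 0 by case: (x_prod a).
split=> [S c lt_rS c_neq0 _|v [c ->] rank_v]; first exact: trank_gt lt_rS.
set S : {set 'I_n} := [set a | c a != 0].
have c_neq0 a : a \in S -> c a != 0 by rewrite inE.
rewrite sum_support -/S in rank_v *; exists S, c; do 2!split=> //.
apply: (unique_trd_sum x_neq0 x_dsum c_neq0 (ltnW m_gt1)).
by rewrite leqNgt; apply/negP => /(trank_gt x_neq0 x_dsum c_neq0).
Qed.
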